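(* Let $(f_m)$ be a frame in $H=\mathcal{L}^2(I)$ with frame bounds $A,B>0$. For each $m$ let $\alpha^m=(\alpha^m_1,\dots,\alpha^m_N)\in(\mathcal{L}^\infty(I))^N$ be scale functions with $\Lambda_m:=\max\{\|\alpha^m_n\|_\infty: n=1,\dots,N\}<1$, and let $f_m*_{T_m}0$ denote the fractal convolution of $f_m$ with the null function with respect to $\alpha^m$. Suppose $$R:=\sum_m\left(\frac{\Lambda_m}{1-\Lambda_m}\right)^2\|f_m\|_2^2<A.$$ Then $(f_m*_{T_m}0)$ is a frame in $H$ with frame bounds $A\left(1-\sqrt{R/A}\right)^2$ and $B\left(1+\sqrt{R/B}\right)^2$.
   Context: Let $N\ge 2$, $I=[x_0,x_N]$, $\Delta: x_0<\dots<x_N$ a fixed partition, $L_n(x)=a_nx+b_n$ affine with $L_n(x_0)=x_{n-1}$, $L_n(x_N)=x_n$, $I_1=[x_0,x_1]$, $I_n=(x_{n-1},x_n]$ for $n\ge2$. For scale functions $\alpha=(\alpha_n)\in(\mathcal{L}^\infty(I))^N$ with $\operatorname{ess\,sup}_{n,x}|\alpha_n(x)|<1$ and $f,b\in\mathcal{L}^2(I)$, the fractal convolution $f*_Tb$ is the unique fixed point in $\mathcal{L}^2(I)$ of the contraction $Tg(x):=f(x)+\alpha_n(L_n^{-1}(x))(g-b)(L_n^{-1}(x))$, $x\in I_n$. A sequence $(g_m)$ in a separable Hilbert space $H$ is a frame with frame bounds $A,B>0$ if $A\|f\|^2\le\sum_m|\langle f,g_m\rangle|^2\le B\|f\|^2$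 for all $f\in H$. *)

From HB Require Import structures.
From mathcomp Require Import all_boot all_order all_algebra.
From mathcomp Require Import all_classical all_reals all_analysis.
Set Implicit Arguments. Unset Strict Implicit. Unset Printing Implicit Defensive.
Import Order.TTheory GRing.Theory Num.Theory.
Import numFieldNormedType.Exports.
Local Open Scope classical_set_scope.
Local Open Scope ring_scope.

Section FractalDefs.
Variable R : realType.
Local Notation mu := (@lebesgue_measure R).

Definition fc_Ival (x : nat -> R) (N : nat) : set R := [set` `[x 0%N, x N]].

Definition fc_partition (x : nat -> R) (N : nat) : Prop :=
  forall n, (n < N)%N -> x n < x n.+1.

Definition fc_Ipiece (x : nat -> R) (n : nat) : set R :=
  if n == 1%N then [set` `[x 0%N, x 1%N]] else [set` `]x n.-1, x n]].

(* L_n^{-1} for the affine L_n with L_n(x_0) = x_{n-1}, L_n(x_N) = x_n. *)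
Definition fc_Linv (x : nat -> R) (N n : nat) (y : R) : R :=
  x 0%N + (y - x n.-1) * (x N - x 0%N) / (x n - x n.-1).

Definition fc_L2 (D : set R) (f : R -> R) : Prop :=
  measurable_fun D f /\ (\int[mu]_(t in D) ((f t) ^+ 2)%:E < +oo)%E.

Definition fc_ip (D : set R) (f g : R -> R) : R :=
  Rintegral mu D (fun t => f t * g t).
Definition fc_norm2sq (D : set R) (f : R -> R) : R :=
  Rintegral mu D (fun t => (f t) ^+ 2).

Definition fc_linf (D : set R) (f : R -> R) : \bar R :=
  ereal_inf [set y : \bar R | {ae mu, forall t, D t -> ((`|f t|)%:E <= y)%E}].

Definition fc_Lambda (x : nat -> R) (N : nat) (alpha : nat -> R -> R) : \bar R :=
  \big[Order.max/(-oo)%E]_(1 <= n < N.+1) fc_linf (fc_Ival x N) (alpha n).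

Definition fc_is_frame (D : set R) (g : nat -> R -> R) (A B : R) : Prop :=
  0 < A /\ 0 < B /\ (forall m, fc_L2 D (g m)) /\
  forall f, fc_L2 D f ->
    ((A * fc_norm2sq D f)%:E <= \sum_(0 <= m <oo) ((fc_ip D f (g m)) ^+ 2)%:E)%E /\
    (\sum_(0 <= m <oo) ((fc_ip D f (g m)) ^+ 2)%:E <= (B * fc_norm2sq D f)%:E)%E.

(* h = f *_T b : h is the fixed point in L^2(I) of
   T g (t) = f t + alpha_n (L_n^{-1} t) (g - b)(L_n^{-1} t),  t in I_n. *)
Definition fc_is_fractal_conv (x : nat -> R) (N : nat) (alpha : nat -> R -> R)
    (f b h : R -> R) : Prop :=
  fc_L2 (fc_Ival x N) h /\
  {ae mu, forall t, fc_Ival x N t -> forall n, (1 <= n <= N)%N -> fc_Ipiece x n t ->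
     h t = f t + alpha n (fc_Linv x N n t) * (h (fc_Linv x N n t) - b (fc_Linv x N n t))}.

End FractalDefs.

From HB Require Import structures.
From mathcomp Require Import all_boot all_order all_algebra.
From mathcomp Require Import all_classical all_reals all_analysis.
From mathcomp Require Import measurable_realfun ring lra.
Set Implicit Arguments. Unset Strict Implicit. Unset Printing Implicit Defensive.
Import Order.TTheory GRing.Theory Num.Theory.
Import numFieldNormedType.Exports.
Local Open Scope classical_set_scope.
Local Open Scope ring_scope.

(* On the n-th piece I_n the fixed-point equation of f *_T 0 reads
   h - f = (alpha_n h) o L_n^-1, and L_n^-1 maps I_n affinely onto I, so the
   affine change of variables gives
   ||h - f||^2_{I_n} = |I_n| / |I| * ||alpha_n h||^2_I
                    <= |I_n| / |I| * Lambda^2 ||h||^2.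
   Summing over the pieces gives
   ||h - f|| <= Lambda ||h|| <= Lambda (||f|| + ||h - f||), i.e.
   ||h - f|| <= Lambda / (1 - Lambda) ||f||.  By Cauchy-Schwarz the
   perturbations <g, h_m - f_m> of the frame coefficients <g, f_m> then have
   square sum at most R ||g||^2, and the new frame bounds follow from the
   weighted triangle inequality (a + b)^2 <= (1 + t) a^2 + (1 + 1/t) b^2 for
   the best choice of t. *)

Lemma sqrD_le (R : realFieldType) (u v t : R) : 0 < t ->
  (u + v) ^+ 2 <= (1 + t) * u ^+ 2 + (1 + t^-1) * v ^+ 2.
Proof.
move=> t_gt0; have t_neq0 : t != 0 by rewrite gt_eqF.
suff -> : (1 + t) * u ^+ 2 + (1 + t^-1) * v ^+ 2 =
          (u + v) ^+ 2 + t^-1 * (t * u - v) ^+ 2.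
  by rewrite lerDl mulr_ge0 ?sqr_ge0 // invr_ge0 ltW.
by rewrite !expr2; field.
Qed.

Lemma sqr_le_of_quadratic_ge0 (R : realFieldType) (F P G : R) : 0 <= G ->
  (forall t, 0 <= F - 2 * t * P + t ^+ 2 * G) -> P ^+ 2 <= F * G.
Proof.
move=> G_ge0 quad_ge0; have [G0|G_neq0] := eqVneq G 0.
  have [->|P_neq0] := eqVneq P 0; first by rewrite G0 expr0n mulr0.
  have := quad_ge0 ((F + 1) / (2 * P)).
  suff -> : F - 2 * ((F + 1) / (2 * P)) * P + ((F + 1) / (2 * P)) ^+ 2 * G = -1.
    by rewrite oppr_ge0 ler10.
  by rewrite G0; field; rewrite P_neq0.
have G_gt0 : 0 < G by rewrite lt_def G_neq0 G_ge0.
have := quad_ge0 (P / G).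
have -> : F - 2 * (P / G) * P + (P / G) ^+ 2 * G = (F * G - P ^+ 2) / G.
  by field.
by rewrite pmulr_lge0 ?invr_gt0 // subr_ge0.
Qed.

Section affine_change_of_variables.
Variable R : realType.
Local Notation mu := (@lebesgue_measure R).
Variables a b p q : R.
Hypotheses (ab : a < b) (pq : p < q).

Let phi t := p + (t - a) * (q - p) / (b - a).
Let psi y := a + (y - p) * (b - a) / (q - p).

Let ba_neq0 : b - a != 0. Proof. by rewrite subr_eq0 gt_eqF. Qed.
Let qp_neq0 : q - p != 0. Proof. by rewrite subr_eq0 gt_eqF. Qed.

Let phi_le s t : (phi s <= phi t) = (s <= t).
Proof.
rewrite /phi lerD2l -!mulrA ler_pM2r ?lerD2r //.
by rewrite mulr_gt0 // ?invr_gt0 subr_gt0.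
Qed.

Let phi_lt s t : (phi s < phi t) = (s < t).
Proof. by rewrite !ltNge phi_le. Qed.

Let phiK y : phi (psi y) = y.
Proof. by rewrite /phi /psi; field; apply/andP. Qed.

Lemma measurable_affine : measurable_fun setT phi.
Proof.
apply: measurable_funD => //; apply: measurable_funM => //.
by apply: measurable_funM => //; exact: measurable_funB.
Qed.

Let preimage_phi_itv_oc u v : phi @^-1` `]u, v] = `]psi u, psi v]%classic.
Proof.
by apply/seteqP; split => t /=;
  rewrite !in_itv /= -[psi u < t]phi_lt -[t <= psi v]phi_le !phiK.
Qed.

Lemma preimage_affine_itv_cc : phi @^-1` `[p, q]%classic = `[a, b]%classic.
Proof.
have [-> ->] : p = phi a /\ q = phi b.
  by split; rewrite /phi; [rewrite subrr !mul0r addr0 | field].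
by apply/seteqP; split => t /=; rewrite !in_itv /= !phi_le.
Qed.

Lemma lebesgue_measure_preimage_affine A : measurable A ->
  mu (phi @^-1` A) = (((b - a) / (q - p))%:E * mu A)%E.
Proof.
have k_ge0 : 0 <= (q - p) / (b - a) by rewrite divr_ge0 // subr_ge0 ltW.
have mphi := measurable_affine.
have [nu nuE] : exists nu : {measure set (measurableTypeR R) -> \bar R},
    forall A, nu A = mu (phi @^-1` A).
  by unshelve eexists (pushforward mu (phi : R -> measurableTypeR R)
    : {measure set _ -> \bar R}).
(* Scaled by the slope of phi, the image of mu under phi agrees with mu on
   half-open intervals, hence on all Borel sets. *)
have lebE : forall X, ocitv X -> mu X = mscale (NngNum k_ge0) nu X.
  move=> _ [[u v] _ <-] /=.
  rewrite /mscale /= nuE preimage_phi_itv_oc !lebesgue_measure_itv /=.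
  rewrite !lte_fin -[psi u < psi v]phi_lt !phiK.
  case: ifP => _; last by rewrite mule0.
  by rewrite -!EFinD -EFinM; congr EFin; rewrite /psi; field; apply/andP.
move=> mA; have -> : mu A = (((q - p) / (b - a))%:E * nu A)%E.
  exact: (lebesgue_measure_unique lebE mA).
rewrite nuE muleA -EFinM.
suff -> : (b - a) / (q - p) * ((q - p) / (b - a)) = 1 by rewrite mul1e.
by field; apply/andP.
Qed.

Lemma ge0_integral_affine (F : R -> \bar R) :
  measurable_fun `[p, q] F -> (forall y, `[p, q]%classic y -> (0 <= F y)%E) ->
  (\int[mu]_(t in `[a, b]) F (phi t) =
   ((b - a) / (q - p))%:E * \int[mu]_(y in `[p, q]) F y)%E.
Proof.
move=> mF F0; have mphi := measurable_affine.
have c_ge0 : 0 <= (b - a) / (q - p) by rewrite divr_ge0 // subr_ge0 ltW.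
rewrite -preimage_affine_itv_cc -(@ge0_integral_pushforward _ _
  (measurableTypeR R) (measurableTypeR R) R phi mphi mu `[p, q]%classic) //;
  last by move=> y; rewrite inE; exact: F0.
rewrite -(@ge0_integral_mscale _ (measurableTypeR R) R mu _ _ (NngNum c_ge0))//.
apply: eq_measure_integral => A mA _.
exact: (lebesgue_measure_preimage_affine mA).
Qed.

End affine_change_of_variables.

Section square_integrable.
Variable R : realType.
Local Notation mu := (@lebesgue_measure R).
Variable D : set R.
Hypothesis mD : @measurable _ (measurableTypeR R) D.
Local Notation integrable f := (mu.-integrable D (EFin \o f)).
Implicit Types f g : R -> R.

Lemma integrableZl_EFin (r : R) (f : R -> R) :
  integrable f -> integrable (fun t => r * f t).
Proof.
move=> intf; refine (eq_integrable mD _ _ _ (integrableZl mD r intf)) => t _ /=.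
by rewrite EFinM.
Qed.

Lemma integrableD_EFin (f g : R -> R) :
  integrable f -> integrable g -> integrable (fun t => f t + g t).
Proof.
move=> intf intg.
refine (eq_integrable mD _ _ _ (integrableD mD intf intg)) => t _ /=.
by rewrite EFinD.
Qed.

Lemma fc_L2_integrable_sqr f : fc_L2 D f -> integrable (fun t => f t ^+ 2).
Proof.
move=> [mf f2_lt]; apply/integrableP; split.
  by apply/measurable_EFinP; exact: measurable_funX.
apply: le_lt_trans f2_lt; rewrite le_eqVlt; apply/orP; left; apply/eqP.
by apply: eq_integral => t _ /=; rewrite ger0_norm ?sqr_ge0.
Qed.

Lemma fc_norm2sqE f : fc_L2 D f ->
  (\int[mu]_(t in D) (f t ^+ 2)%:E)%E = (fc_norm2sq D f)%:E.
Proof.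
move=> [_ f2_lt]; rewrite /fc_norm2sq /Rintegral fineK // ge0_fin_numE //.
by apply: integral_ge0 => t _; rewrite lee_fin sqr_ge0.
Qed.

Lemma fc_norm2sq_ge0 f : 0 <= fc_norm2sq D f.
Proof. by apply: Rintegral_ge0 => t _; exact: sqr_ge0. Qed.

Lemma fc_L2_integrable_mul f g : fc_L2 D f -> fc_L2 D g ->
  integrable (fun t => f t * g t).
Proof.
move=> f2 g2; have [[mf _] [mg _]] := (f2, g2).
have := integrableD_EFin (fc_L2_integrable_sqr f2) (fc_L2_integrable_sqr g2).
apply: le_integrable => //.
  by apply/measurable_EFinP; exact: measurable_funM.
move=> t _ /=; rewrite lee_fin [leRHS]ger0_norm ?addr_ge0 ?sqr_ge0 // normrM.
rewrite -[f t ^+ 2]real_normK ?num_real // -[g t ^+ 2]real_normK ?num_real //.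
have := sqr_ge0 (`|f t| - `|g t|); have := normr_ge0 (f t).
have := normr_ge0 (g t); nra.
Qed.

Lemma fc_L2_of_integrable_sqr f : measurable_fun D f ->
  integrable (fun t => f t ^+ 2) -> fc_L2 D f.
Proof.
move=> mf /integrableP[_ f2_lt]; split => //.
apply: le_lt_trans f2_lt; rewrite le_eqVlt; apply/orP; left; apply/eqP.
by apply: eq_integral => t _ /=; rewrite ger0_norm ?sqr_ge0.
Qed.

Lemma fc_L2B f g : fc_L2 D f -> fc_L2 D g -> fc_L2 D (fun t => f t - g t).
Proof.
move=> f2 g2; have [[mf _] [mg _]] := (f2, g2).
have mfg : measurable_fun D (fun t => f t - g t) by exact: measurable_funB.
apply: fc_L2_of_integrable_sqr => //.
have := integrableD_EFin (integrableZl_EFin 2 (fc_L2_integrable_sqr f2))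
                         (integrableZl_EFin 2 (fc_L2_integrable_sqr g2)).
apply: le_integrable => //.
  by apply/measurable_EFinP; exact: measurable_funX.
move=> t _ /=; rewrite lee_fin ger0_norm ?sqr_ge0 // ger0_norm; last first.
  by rewrite addr_ge0 // mulr_ge0 // sqr_ge0.
have := sqr_ge0 (f t + g t); nra.
Qed.

Lemma fc_ipDr g f1 f2 : fc_L2 D g -> fc_L2 D f1 -> fc_L2 D f2 ->
  fc_ip D g (fun t => f1 t + f2 t) = fc_ip D g f1 + fc_ip D g f2.
Proof.
move=> g2 f12 f22; rewrite /fc_ip -RintegralD ?fc_L2_integrable_mul //.
by apply: eq_Rintegral => t _; rewrite mulrDr.
Qed.

Lemma fc_norm2sq_expand f g (r : R) : fc_L2 D f -> fc_L2 D g ->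
  fc_norm2sq D (fun t => f t - r * g t) =
  fc_norm2sq D f - 2 * r * fc_ip D f g + r ^+ 2 * fc_norm2sq D g.
Proof.
move=> f2 g2; have fg := fc_L2_integrable_mul f2 g2.
have [ff gg] := (fc_L2_integrable_sqr f2, fc_L2_integrable_sqr g2).
rewrite /fc_norm2sq /fc_ip -mulNr -!RintegralZl //.
rewrite -!RintegralD ?integrableD_EFin ?integrableZl_EFin //.
by apply: eq_Rintegral => t _; rewrite !expr2; ring.
Qed.

Lemma fc_ip_sqr_le f g : fc_L2 D f -> fc_L2 D g ->
  fc_ip D f g ^+ 2 <= fc_norm2sq D f * fc_norm2sq D g.
Proof.
move=> f2 g2; apply: sqr_le_of_quadratic_ge0; first exact: fc_norm2sq_ge0.
by move=> r; rewrite -fc_norm2sq_expand // fc_norm2sq_ge0.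
Qed.

Lemma fc_norm2sq_le_weighted f g (r : R) : fc_L2 D f -> fc_L2 D g -> 0 < r ->
  fc_norm2sq D g <=
  (1 + r) * fc_norm2sq D f + (1 + r^-1) * fc_norm2sq D (fun t => g t - f t).
Proof.
move=> f2 g2 r_gt0; have gf2 := fc_L2B g2 f2.
rewrite /fc_norm2sq -!RintegralZl ?fc_L2_integrable_sqr //.
rewrite -RintegralD ?integrableZl_EFin ?fc_L2_integrable_sqr //.
apply: le_Rintegral => //.
- exact: fc_L2_integrable_sqr.
- by apply: integrableD_EFin; apply: integrableZl_EFin;
    exact: fc_L2_integrable_sqr.
- by move=> t _; rewrite -{1}[g t](subrK (f t)) addrC sqrD_le.
Qed.

Lemma fc_norm2sq_subr_bound g f (l : R) :
  fc_L2 D g -> fc_L2 D f -> 0 <= l < 1 ->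
  fc_norm2sq D (fun t => g t - f t) <= l ^+ 2 * fc_norm2sq D g ->
  fc_norm2sq D (fun t => g t - f t) <= (l / (1 - l)) ^+ 2 * fc_norm2sq D f.
Proof.
move=> g2 f2 /andP[l_ge0 l_lt1].
set d := fc_norm2sq D _; set nf := fc_norm2sq D f => d_le.
have [l0|l_neq0] := eqVneq l 0.
  by move: d_le; rewrite l0 expr0n !mul0r expr0n mul0r.
have l_gt0 : 0 < l by rewrite lt_def l_neq0.
have l1_gt0 : 0 < 1 - l by rewrite subr_gt0.
have := fc_norm2sq_le_weighted f2 g2 (divr_gt0 l_gt0 l1_gt0).
rewrite -/d -/nf => /(ler_wpM2l (sqr_ge0 l)) /(le_trans d_le).
have -> : l ^+ 2 * ((1 + l / (1 - l)) * nf + (1 + (l / (1 - l))^-1) * d) =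
          l ^+ 2 / (1 - l) * nf + l * d.
  by field; rewrite l_neq0 gt_eqF.
move=> key; rewrite -(ler_pM2l l1_gt0) mulrA.
have -> : (1 - l) * (l / (1 - l)) ^+ 2 = l ^+ 2 / (1 - l).
  by field; rewrite gt_eqF.
by rewrite mulrBl mul1r lerBlDr.
Qed.

End square_integrable.

Section frame_perturbation.
Variable R : realType.
Local Open Scope ereal_scope.
Implicit Types (u v : nat -> R) (A B G Rv : R).

Lemma nneseries_sqrD_le u v (t : R) : (0 < t)%R ->
  \sum_(0 <= m <oo) ((u m + v m) ^+ 2)%:E <=
  (1 + t)%:E * \sum_(0 <= m <oo) (u m ^+ 2)%:E +
  (1 + t^-1)%:E * \sum_(0 <= m <oo) (v m ^+ 2)%:E.
Proof.
move=> t_gt0.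
have sqr_ge0E (w : R) : 0 <= (w ^+ 2)%:E by rewrite lee_fin sqr_ge0.
have t1_ge0 : (0 <= 1 + t)%R by rewrite addr_ge0 // ltW.
have t2_ge0 : (0 <= 1 + t^-1)%R by rewrite addr_ge0 // invr_ge0 ltW.
apply: (@le_trans _ _ (\sum_(0 <= m <oo)
    ((1 + t)%:E * (u m ^+ 2)%:E + (1 + t^-1)%:E * (v m ^+ 2)%:E))).
  apply: lee_nneseries => // m _.
  by rewrite -!EFinM -EFinD lee_fin sqrD_le.
by rewrite nneseriesD ?nneseriesZl // => m _ _; rewrite mule_ge0.
Qed.

Lemma frame_perturbation_upper u v B G Rv : (0 < B)%R -> (0 < Rv)%R ->
  \sum_(0 <= m <oo) (v m ^+ 2)%:E <= (Rv * G)%:E ->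
  \sum_(0 <= m <oo) (u m ^+ 2)%:E <= (B * G)%:E ->
  \sum_(0 <= m <oo) ((u m + v m) ^+ 2)%:E <=
  (B * (1 + Num.sqrt (Rv / B)) ^+ 2 * G)%:E.
Proof.
move=> B_gt0 Rv_gt0 sv su; set t := Num.sqrt _.
have t_gt0 : (0 < t)%R by rewrite sqrtr_gt0 divr_gt0.
have Rv_E : Rv = (t ^+ 2 * B)%R.
  by rewrite sqr_sqrtr ?divfK ?gt_eqF // ltW ?divr_gt0.
rewrite {}Rv_E in sv; apply: (le_trans (nneseries_sqrD_le u v t_gt0)).
apply: (@le_trans _ _
  ((1 + t)%:E * (B * G)%:E + (1 + t^-1)%:E * (t ^+ 2 * B * G)%:E)).
  by apply: leeD; apply: lee_wpmul2l => //;
    rewrite lee_fin addr_ge0 ?invr_ge0 ?ltW.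
by rewrite -!EFinM -EFinD lee_fin le_eqVlt; apply/orP; left; apply/eqP; field;
  rewrite gt_eqF.
Qed.

Lemma frame_perturbation_lower u v A G Rv : (0 < Rv)%R -> (Rv < A)%R ->
  \sum_(0 <= m <oo) (v m ^+ 2)%:E <= (Rv * G)%:E ->
  (A * G)%:E <= \sum_(0 <= m <oo) (u m ^+ 2)%:E ->
  \sum_(0 <= m <oo) ((u m + v m) ^+ 2)%:E \is a fin_num ->
  (A * (1 - Num.sqrt (Rv / A)) ^+ 2 * G)%:E <=
  \sum_(0 <= m <oo) ((u m + v m) ^+ 2)%:E.
Proof.
move=> Rv_gt0 Rv_lt_A sv su S_fin; have A_gt0 := lt_trans Rv_gt0 Rv_lt_A.
set S := \sum_(0 <= m <oo) _ in S_fin *; set s := Num.sqrt _.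
have s_gt0 : (0 < s)%R by rewrite sqrtr_gt0 divr_gt0.
have s_lt1 : (s < 1)%R by rewrite -sqrtr1 ltr_sqrt // ltr_pdivrMr // mul1r.
have Rv_E : Rv = (s ^+ 2 * A)%R.
  by rewrite sqr_sqrtr ?divfK ?gt_eqF // ltW ?divr_gt0.
have s1_gt0 : (0 < 1 - s)%R by rewrite subr_gt0.
set t := (s / (1 - s))%R; have t_gt0 : (0 < t)%R by rewrite divr_gt0.
have u_le : \sum_(0 <= m <oo) (u m ^+ 2)%:E <=
             (1 + t)%:E * S + (1 + t^-1)%:E * (Rv * G)%:E.
  have := nneseries_sqrD_le (fun m => u m + v m)%R (fun m => - v m)%R t_gt0.
  rewrite (eq_eseriesr (fun m _ => congr1 (fun w => (w ^+ 2)%:E) (addrK _ _))).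
  rewrite (eq_eseriesr (fun m _ => congr1 EFin (sqrrN (v m)))) -/S.
  move=> /le_trans; apply; apply: leeD => //; apply: lee_wpmul2l => //.
  by rewrite lee_fin addr_ge0 // invr_ge0 ltW.
have := le_trans su u_le.
rewrite -(fineK S_fin) -!EFinM -EFinD !lee_fin Rv_E => key.
rewrite -(ler_pM2l (addr_gt0 ltr01 t_gt0)).
have -> : ((1 + t) * (A * (1 - s) ^+ 2 * G) =
           A * G - (1 + t^-1) * (s ^+ 2 * A * G))%R.
  by rewrite /t; field; rewrite !gt_eqF.
by rewrite lerBlDr.
Qed.

Lemma frame_perturbation u v A B G Rv :
  (0 < A)%R -> (0 < B)%R -> (0 <= Rv)%R -> (Rv < A)%R ->
  \sum_(0 <= m <oo) (v m ^+ 2)%:E <= (Rv * G)%:E ->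
  (A * G)%:E <= \sum_(0 <= m <oo) (u m ^+ 2)%:E ->
  \sum_(0 <= m <oo) (u m ^+ 2)%:E <= (B * G)%:E ->
  (A * (1 - Num.sqrt (Rv / A)) ^+ 2 * G)%:E <=
    \sum_(0 <= m <oo) ((u m + v m) ^+ 2)%:E /\
  \sum_(0 <= m <oo) ((u m + v m) ^+ 2)%:E <=
    (B * (1 + Num.sqrt (Rv / B)) ^+ 2 * G)%:E.
Proof.
move=> A_gt0 B_gt0 Rv_ge0 Rv_lt_A sv suA suB.
have [Rv0|Rv_neq0] := eqVneq Rv 0%R.
  have v0 m : v m = 0%R.
    have sqr_ge0E k : 0 <= (v k ^+ 2)%:E by rewrite lee_fin sqr_ge0.
    rewrite Rv0 mul0r in sv.
    apply/eqP; rewrite -sqrf_eq0 eq_le sqr_ge0 andbT -lee_fin.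
    apply: le_trans _ sv; rewrite (nneseriesD1 (n := m)) // leeDl //.
    exact: nneseries_ge0.
  rewrite Rv0 !mul0r sqrtr0 subr0 addr0 expr1n !mulr1.
  by under eq_eseriesr do rewrite v0 addr0.
have Rv_gt0 : (0 < Rv)%R by rewrite lt_def Rv_neq0.
have upper := frame_perturbation_upper B_gt0 Rv_gt0 sv suB.
split => //; apply: frame_perturbation_lower => //.
rewrite ge0_fin_numE ?(le_lt_trans upper) ?ltry //.
by apply: nneseries_ge0 => m _ _; rewrite lee_fin sqr_ge0.
Qed.

End frame_perturbation.

Section essential_supremum.
Variable R : realType.
Local Notation mu := (@lebesgue_measure R).

Lemma fc_linf_ae_le (D : set R) (g : R -> R) (z : R) :
  (fc_linf D g <= z%:E)%E -> {ae mu, forall t, D t -> `|g t| <= z}.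
Proof.
move=> gz.
have ae_le e : (fc_linf D g < e%:E)%E -> {ae mu, forall t, D t -> `|g t| <= e}.
  move=> /ereal_inf_lt[y ae_y y_lt_e].
  apply: (filterS (Filter := ae_filter_ringOfSetsType mu)) ae_y => t gy Dt.
  by rewrite -lee_fin (le_trans (gy Dt)) ?ltW.
have /ae_foralln : forall k, {ae mu, forall t, D t -> `|g t| <= z + k.+1%:R^-1}.
  by move=> k; apply: ae_le; rewrite (le_lt_trans gz) // lte_fin ltrDl invr_gt0.
apply: (filterS (Filter := ae_filter_ringOfSetsType mu)) => t gz_k Dt.
apply/ler_addgt0Pr => e e_gt0.
have [k _ /(_ k (leqnn k)) ke] := near_infty_natSinv_lt (PosNum e_gt0).
by rewrite (le_trans (gz_k k Dt)) // lerD2l ltW.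
Qed.

Lemma fc_linf_le_Lambda (x : nat -> R) (N n : nat) (al : nat -> R -> R) :
  (1 <= n <= N)%N -> (fc_linf (fc_Ival x N) (al n) <= fc_Lambda x N al)%E.
Proof.
move=> /andP[n_ge1 n_leN]; rewrite /fc_Lambda.
apply: le_trans (le_bigmax_nat _ (fun i => fc_linf (fc_Ival x N) (al i)) n_ge1
  (leqnn N.+1)).
by rewrite big_ltn ?ltnS // le_max lexx.
Qed.

(* Without a positive-measure argument [fc_Lambda] is not known to be
   nonnegative, hence the [Num.max _ 0]. *)
Lemma fc_Lambda_ae_le (x : nat -> R) (N n : nat) (al : nat -> R -> R) :
  (1 <= n <= N)%N -> (fc_Lambda x N al < +oo)%E ->
  {ae mu, forall t, fc_Ival x N t ->
    `|al n t| <= Num.max (fine (fc_Lambda x N al)) 0}.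
Proof.
move=> nN L_lt_oo; apply: fc_linf_ae_le.
apply: le_trans (fc_linf_le_Lambda x al nN) _.
by case: (fc_Lambda x N al) L_lt_oo => [r| |] //= _;
  rewrite ?lee_fin ?le_max ?lexx ?leNye.
Qed.

End essential_supremum.

Lemma fc_partition_le (R : realType) (x : nat -> R) (N i j : nat) :
  fc_partition x N -> (i <= j <= N)%N -> x i <= x j.
Proof.
move=> part /andP[]; elim: j => [|j IH]; first by rewrite leqn0 => /eqP ->.
rewrite leq_eqVlt => /orP[/eqP -> //|]; rewrite ltnS => ij jN.
exact: le_trans (IH ij (ltnW jN)) (ltW (part _ jN)).
Qed.

Lemma fc_partition_lt0N (R : realType) (x : nat -> R) (N : nat) :
  (0 < N)%N -> fc_partition x N -> x 0 < x N.
Proof.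
move=> N_gt0 part; apply: lt_le_trans (part _ N_gt0) _.
by rewrite (fc_partition_le part) // N_gt0 leqnn.
Qed.

Lemma ge0_integral_mulr_sqr_le (R : realType) (D : set R) (a g : R -> R)
    (l : R) :
  @measurable _ (measurableTypeR R) D ->
  measurable_fun D a -> measurable_fun D g ->
  {ae lebesgue_measure, forall t, D t -> `|a t| <= l} ->
  (\int[lebesgue_measure]_(t in D) ((a t * g t) ^+ 2)%:E <=
   (l ^+ 2)%:E * \int[lebesgue_measure]_(t in D) (g t ^+ 2)%:E)%E.
Proof.
move=> mD ma mg a_le.
have mg2 : measurable_fun D (fun t => g t ^+ 2) by exact: measurable_funX.
rewrite -ge0_integralZl_EFin ?sqr_ge0 //; last 2 first.
- by move=> t _; rewrite lee_fin sqr_ge0.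
- exact/measurable_EFinP.
under [X in (_ <= X)%E]eq_integral do rewrite -EFinM.
apply: ae_ge0_le_integral => //.
- by move=> t _; rewrite lee_fin sqr_ge0.
- by apply/measurable_EFinP; apply: measurable_funX; exact: measurable_funM.
- by move=> t _; rewrite lee_fin mulr_ge0 ?sqr_ge0.
- by apply/measurable_EFinP; exact: measurable_funM.
apply: (filterS (Filter := ae_filter_ringOfSetsType _)) a_le => t al Dt.
rewrite lee_fin exprMn ler_wpM2r ?sqr_ge0 // -real_normK ?num_real //.
by rewrite lerXn2r ?nnegrE ?(le_trans _ (al Dt)).
Qed.

Section fractal_convolution_estimate.
Variable R : realType.
Local Notation mu := (@lebesgue_measure R).
Variables (N : nat) (x : nat -> R) (al : nat -> R -> R) (f h : R -> R).
Variable lam : R.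
Hypotheses (N_gt0 : (0 < N)%N) (part : fc_partition x N).
Hypothesis mal :
  forall n, (1 <= n <= N)%N -> measurable_fun (fc_Ival x N) (al n).
Hypothesis al_le : forall n, (1 <= n <= N)%N ->
  {ae mu, forall t, fc_Ival x N t -> `|al n t| <= lam}.
Hypothesis conv : fc_is_fractal_conv x N al f (fun=> 0) h.
Hypothesis f2 : fc_L2 (fc_Ival x N) f.

Local Notation I := (fc_Ival x N).

Let mI : @measurable _ (measurableTypeR R) I. Proof. exact: measurable_itv. Qed.
Let h2 : fc_L2 I h. Proof. by case: conv. Qed.
Let hf2 : fc_L2 I (fun t => h t - f t). Proof. exact: fc_L2B. Qed.
Let x0N := fc_partition_lt0N N_gt0 part.

Lemma fractal_conv_piece n : (1 <= n <= N)%N ->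
  (\int[mu]_(t in `]x n.-1, x n]) ((h t - f t) ^+ 2)%:E =
   ((x n - x n.-1) / (x N - x 0))%:E *
   \int[mu]_(t in I) ((al n t * h t) ^+ 2)%:E)%E.
Proof.
move=> nN; have /andP[n_ge1 n_leN] := nN.
have ab : x n.-1 < x n.
  by have := @part n.-1; rewrite prednK //; apply.
have x0a : x 0 <= x n.-1.
  by apply: (fc_partition_le part); rewrite leq0n (leq_trans (leq_pred n)).
have bN : x n <= x N by apply: (fc_partition_le part); rewrite n_leN leqnn.
set a := x n.-1; set b := x n; set p := x 0; set q := x N.
set phi := fun t => p + (t - a) * (q - p) / (b - a).
set G := fun y => ((al n y * h y) ^+ 2)%:E.
have sub_oc : `]a, b] `<=` I.
  move=> t /=; rewrite !in_itv /= => /andP[ta tb].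
  by apply/andP; split; [exact: le_trans x0a (ltW ta) | exact: le_trans tb bN].
have mG : measurable_fun I G.
  by apply/measurable_EFinP; apply: measurable_funX; apply: measurable_funM;
    [exact: mal | case: h2].
have phiI : phi @` `[a, b] `<=` I.
  by move=> _ [t tab <-]; rewrite -(preimage_affine_itv_cc ab x0N) in tab.
have mGphi : measurable_fun `[a, b] (G \o phi).
  apply: measurable_comp mI phiI mG _ => //.
  exact: measurable_funS measurableT (subsetT _) (measurable_affine a b p q).
have mGphi_oc : measurable_fun `]a, b] (G \o phi).
  apply: measurable_funS mGphi => // t /=; rewrite !in_itv /=.
  by move=> /andP[/ltW -> ->].
transitivity (\int[mu]_(t in `[a, b]) (G \o phi) t)%E; last first.
  by apply: ge0_integral_affine => // y _; rewrite lee_fin sqr_ge0.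
rewrite -integral_itv_obnd_cbnd //.
apply: ae_eq_integral => //.
- apply: measurable_funS mI sub_oc _.
  by apply/measurable_EFinP; apply: measurable_funX; case: hf2.
case: conv => _; apply: (filterS (Filter := ae_filter_ringOfSetsType mu)).
move=> t conv_t /[dup] /sub_oc It tab.
have Pn : fc_Ipiece x n t.
  rewrite /fc_Ipiece; case: eqP => [n1|_] //.
  by move: tab; rewrite /a /b n1 /= !in_itv /= => /andP[/ltW -> ->].
by rewrite (conv_t It n nN Pn) subr0 addrC addKr /G /phi /fc_Linv /= exprMn.
Qed.

Lemma fractal_conv_prefix_le k : (k <= N)%N ->
  (\int[mu]_(t in `[x 0, x k]) ((h t - f t) ^+ 2)%:E <=
   ((x k - x 0) / (x N - x 0) * lam ^+ 2 * fc_norm2sq I h)%:E)%E.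
Proof.
have mhf : measurable_fun I (fun t => ((h t - f t) ^+ 2)%:E).
  by apply/measurable_EFinP; apply: measurable_funX; case: hf2.
elim: k => [_|k IH k_ltN].
  by rewrite set_itv1 integral_set1 subrr !mul0r.
have x0k : x 0 <= x k by apply: (fc_partition_le part); rewrite /= ltnW.
have xkSk : x k < x k.+1 := part k_ltN.
have xSkN : x k.+1 <= x N.
  by apply: (fc_partition_le part); rewrite k_ltN leqnn.
have splitE : `[x 0, x k.+1]%classic =
              `[x 0, x k]%classic `|` `]x k, x k.+1]%classic.
  by rewrite -itv_bndbnd_setU // bnd_simp ltW.
rewrite splitE ge0_integral_setU //; first last.
- apply/disj_setPLR => t /=; rewrite !in_itv /= => /andP[_ tk]; apply/negP.
  by rewrite negb_and -leNgt tk.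
- by move=> t _; rewrite lee_fin sqr_ge0.
- rewrite -splitE; apply: measurable_funS mI _ mhf => t /=.
  rewrite !in_itv /= => /andP[t0 tk].
  by rewrite /fc_Ival /= in_itv /= t0 (le_trans tk xSkN).
rewrite [X in (_ + X)%E](@fractal_conv_piece k.+1 k_ltN) /=.
have c_ge0 : (0 <= ((x k.+1 - x k) / (x N - x 0))%:E)%E.
  by rewrite lee_fin divr_ge0 // subr_ge0 ltW.
have := ge0_integral_mulr_sqr_le mI (@mal k.+1 k_ltN) (proj1 h2)
  (@al_le k.+1 k_ltN).
rewrite (fc_norm2sqE h2) => /(lee_wpmul2l c_ge0) piece.
apply: le_trans (leeD (IH (ltnW k_ltN)) piece) _.
rewrite muleA -!EFinM -EFinD lee_fin le_eqVlt; apply/orP; left; apply/eqP.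
by field; rewrite gt_eqF // subr_gt0.
Qed.

Lemma fractal_conv_sub_le :
  fc_norm2sq I (fun t => h t - f t) <= lam ^+ 2 * fc_norm2sq I h.
Proof.
have := fractal_conv_prefix_le (leqnn N).
by rewrite divff ?mul1r ?subr_eq0 ?gt_eqF // (fc_norm2sqE hf2) lee_fin.
Qed.

End fractal_convolution_estimate.

Lemma fractal_conv_sub_bound (R : realType) (N : nat) (x : nat -> R)
    (al : nat -> R -> R) (f h : R -> R) :
  (0 < N)%N -> fc_partition x N ->
  (forall n, (1 <= n <= N)%N -> measurable_fun (fc_Ival x N) (al n)) ->
  (fc_Lambda x N al < 1)%E -> fc_is_fractal_conv x N al f (fun=> 0) h ->
  fc_L2 (fc_Ival x N) f ->
  fc_norm2sq (fc_Ival x N) (fun t => h t - f t) <=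
  (fine (fc_Lambda x N al) / (1 - fine (fc_Lambda x N al))) ^+ 2 *
  fc_norm2sq (fc_Ival x N) f.
Proof.
move=> N_gt0 part mal L_lt1 conv f2; set L := fine _.
have L_lt1' : L < 1 by move: L_lt1; rewrite /L; case: (fc_Lambda x N al).
have al_le n (nN : (1 <= n <= N)%N) :=
  fc_Lambda_ae_le nN (lt_trans L_lt1 (ltry 1)).
have lam_ge0 : 0 <= Num.max L 0 by rewrite le_max lexx orbT.
have lam_lt1 : Num.max L 0 < 1 by rewrite gt_max L_lt1' ltr01.
have mI : @measurable _ (measurableTypeR R) (fc_Ival x N).
  exact: measurable_itv.
have := fc_norm2sq_subr_bound mI (proj1 conv) f2 _
  (fractal_conv_sub_le N_gt0 part mal al_le conv f2).
rewrite lam_ge0 lam_lt1 => /(_ isT) /le_trans; apply; apply: ler_wpM2r.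
  exact: fc_norm2sq_ge0.
by have [L_ge0|L_lt0] := leP 0 L; rewrite ?mul0r ?expr0n ?sqr_ge0.
Qed.

Unset Implicit Arguments.

Theorem theorem7p2 (R : realType) (N : nat) (x : nat -> R)
  (f : nat -> R -> R) (alpha : nat -> nat -> R -> R) (h : nat -> R -> R)
  (A B Rv : R) :
  (2 <= N)%N ->
  fc_partition x N ->
  fc_is_frame (fc_Ival x N) f A B ->
  (forall m n, (1 <= n <= N)%N -> measurable_fun (fc_Ival x N) (alpha m n)) ->
  (forall m, (fc_Lambda x N (alpha m) < 1)%E) ->
  (forall m, fc_is_fractal_conv x N (alpha m) (f m) (fun=> 0) (h m)) ->
  ((\sum_(0 <= m <oo)
      ((fine (fc_Lambda x N (alpha m)) / (1 - fine (fc_Lambda x N (alpha m)))) ^+ 2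
        * fc_norm2sq (fc_Ival x N) (f m))%:E) = Rv%:E)%E ->
  Rv < A ->
  fc_is_frame (fc_Ival x N) h (A * (1 - Num.sqrt (Rv / A)) ^+ 2)
                        (B * (1 + Num.sqrt (Rv / B)) ^+ 2).
Proof.
move=> N_ge2 part [A_gt0 [B_gt0 [f2 frame]]] mal Lambda_lt1 conv sumR Rv_lt_A.
set I := fc_Ival x N; set Lambda := fun m => fine (fc_Lambda x N (alpha m)).
pose w m := (Lambda m / (1 - Lambda m)) ^+ 2 * fc_norm2sq I (f m).
have mI : @measurable _ (measurableTypeR R) I by exact: measurable_itv.
have hf2 m : fc_L2 I (fun t => h m t - f m t).
  by apply: fc_L2B => //; case: (conv m).
have hf_le m : fc_norm2sq I (fun t => h m t - f m t) <= w m.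
  exact: fractal_conv_sub_bound (leq_trans _ N_ge2) part (mal m) _ (conv m)
    (f2 m).
have w_ge0 m : 0 <= w m by rewrite mulr_ge0 ?sqr_ge0 ?fc_norm2sq_ge0.
have Rv_ge0 : 0 <= Rv.
  rewrite -lee_fin -sumR; apply: nneseries_ge0 => m _ _.
  by rewrite lee_fin; exact: w_ge0.
split; first by rewrite mulr_gt0 // exprn_gt0 // subr_gt0 -sqrtr1 ltr_sqrt
  // ltr_pdivrMr // mul1r.
split; first by rewrite mulr_gt0 // exprn_gt0 // ltr_pwDr // sqrtr_ge0.
split=> [m|g g2]; first by case: (conv m).
have [frameA frameB] := frame g g2.
have ipE m :
    fc_ip I g (h m) = fc_ip I g (f m) + fc_ip I g (fun t => h m t - f m t).
  by rewrite -fc_ipDr //; congr fc_ip; apply: funext => t; rewrite subrKC.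
under eq_eseriesr do rewrite ipE.
apply: frame_perturbation => //.
rewrite EFinM -sumR muleC -nneseriesZl => [|m _]; last first.
  by rewrite lee_fin; exact: w_ge0.
apply: lee_nneseries => [m _ _|m _]; first by rewrite lee_fin sqr_ge0.
rewrite -EFinM lee_fin; apply: le_trans (fc_ip_sqr_le mI g2 (hf2 m)) _.
by apply: ler_wpM2l; [exact: fc_norm2sq_ge0 | exact: hf_le].
Qed.
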